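(* For every $n\ge 4$ and every integer $\ell\ge 1$, there is no perfect lattice code in $\mathcal{A}(n,n-2,\ell)$.
   Context: For integers $n\ge 1$, $0\le t\le n$, $\ell\ge 1$, let $\mathcal{S}(n,t,\ell)=\{\mathcal{E}=(\varepsilon_1,\dots,\varepsilon_n)\in\mathbb{Z}^n: 0\le\varepsilon_i\le\ell \text{ for all } i,\ w_H(\mathcal{E})\le t\}$, where $w_H$ is the number of nonzero coordinates. A lattice here is an integer lattice: the set of integer combinations of $n$ linearly independent vectors of $\mathbb{Z}^n$. $\mathcal{A}(n,t,\ell)$ is the set of lattices $\mathcal{L}\subseteq\mathbb{Z}^n$ that are packings with $\mathcal{S}(n,t,\ell)$, i.e. the translates $X+\mathcal{S}(n,t,\ell)$, $X\in\mathcal{L}$, are pairwise disjoint (lattice codes correcting $t$ asymmetric errors of limited magnitude $\ell$). Such $\mathcal{L}$ is perfect if these translates also cover $\mathbb{Z}^n$. *)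

From mathcomp Require Import all_boot all_order all_algebra.
Set Implicit Arguments. Unset Strict Implicit. Unset Printing Implicit Defensive.
Import Order.TTheory GRing.Theory Num.Theory.
Local Open Scope ring_scope.

Definition zvec (n : nat) := 'I_n -> int.

Definition wH (n : nat) (e : zvec n) : nat := #|[pred i : 'I_n | e i != 0]|.

Definition inS (n t l : nat) (e : zvec n) : Prop :=
  (forall i, 0 <= e i <= l%:Z) /\ (wH e <= t)%N.

Definition zcomb (n : nat) (b : 'I_n -> zvec n) (c : 'I_n -> int) : zvec n :=
  fun j => \sum_(i < n) c i * b i j.

Definition lin_indep (n : nat) (b : 'I_n -> zvec n) : Prop :=
  forall c : 'I_n -> int, (forall j, zcomb b c j = 0) -> forall i, c i = 0.

Definition in_lattice (n : nat) (b : 'I_n -> zvec n) (X : zvec n) : Prop :=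
  exists c : 'I_n -> int, forall j, X j = zcomb b c j.

(* L(b) is a packing with S(n,t,l): translates X + S are pairwise disjoint *)
Definition packing (n t l : nat) (b : 'I_n -> zvec n) : Prop :=
  forall X Y e1 e2 : zvec n, in_lattice b X -> in_lattice b Y ->
    inS t l e1 -> inS t l e2 ->
    (forall j, X j + e1 j = Y j + e2 j) -> forall j, X j = Y j.

Definition covering (n t l : nat) (b : 'I_n -> zvec n) : Prop :=
  forall Z : zvec n, exists X e : zvec n,
    in_lattice b X /\ inS t l e /\ forall j, Z j = X j + e j.

Definition perfect_code (n t l : nat) (b : 'I_n -> zvec n) : Prop :=
  lin_indep b /\ packing t l b /\ covering t l b.

From mathcomp Require Import all_boot all_order all_algebra zify.
From Stdlib Require Import Classical_Prop.
Set Implicit Arguments. Unset Strict Implicit. Unset Printing Implicit Defensive.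
Import Order.TTheory GRing.Theory Num.Theory.
Local Open Scope ring_scope.

(* Everything rests on one observation: a nonzero lattice vector D with entries
   in [-l, l] whose positive and negative parts both vanish at two coordinates
   would give two overlapping translates D + D^- = 0 + D^+ of S(n, n-2, l).
   For each m, covering the all-ones vector with its m-th entry replaced by 0
   puts into the lattice the all-ones vector with m-th entry some x in [-l, 0],
   and packing leaves x > -l for at most one index k.  So for every j <> k the
   lattice contains the all-ones vector with j-th entry -l.  For l >= 2 the sum
   of two of these is a forbidden vector; for l = 1, writing -e_k = X + s with
   X in the lattice, so is -X minus the one indexed by a zero j <> k of s. *)

Section LatticeClosure.

Variables (n : nat) (b : 'I_n -> zvec n).

Lemma in_lattice_ext (X Y : zvec n) :
  in_lattice b X -> (forall j, X j = Y j) -> in_lattice b Y.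
Proof. by move=> [c hc] eXY; exists c => j; rewrite -eXY hc. Qed.

Lemma in_lattice0 : in_lattice b (fun _ => 0).
Proof. by exists (fun _ => 0) => j; rewrite /zcomb big1 // => i _; rewrite mul0r. Qed.

Lemma in_latticeB (X Y : zvec n) :
  in_lattice b X -> in_lattice b Y -> in_lattice b (fun j => X j - Y j).
Proof.
move=> [c hc] [d hd]; exists (fun i => c i - d i) => j.
by rewrite hc hd /zcomb -sumrB; apply: eq_bigr => i _; rewrite mulrBl.
Qed.

Lemma in_latticeN (X : zvec n) : in_lattice b X -> in_lattice b (fun j => - X j).
Proof. by move=> hX; apply: in_lattice_ext (in_latticeB in_lattice0 hX) _ => j; rewrite sub0r. Qed.

Lemma in_latticeD (X Y : zvec n) :
  in_lattice b X -> in_lattice b Y -> in_lattice b (fun j => X j + Y j).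
Proof.
move=> hX /in_latticeN hY.
by apply: in_lattice_ext (in_latticeB hX hY) _ => j; rewrite opprK.
Qed.

End LatticeClosure.

Section Weight.

Variable n : nat.

Lemma wH_le_subn2 (e : zvec n) a a' :
  a != a' -> e a = 0 -> e a' = 0 -> (wH e <= n - 2)%N.
Proof.
move=> aa' ea ea'; have cardC2 : #|~: [set a; a']| = (n - 2)%N.
  have := cardsC [set a; a']; rewrite cards2 aa' card_ord /=.
  by move: #|~: _| => k <-; rewrite addKn.
rewrite -cardC2; apply: subset_leq_card; apply/subsetP => i; rewrite !inE /=.
by apply: contraNN => /orP [] /eqP ->; rewrite ?ea ?ea'.
Qed.

Lemma wH_le_subn2_zeros (e : zvec n) :
  (2 <= n)%N -> (wH e <= n - 2)%N -> exists a a', [/\ a != a', e a = 0 & e a' = 0].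
Proof.
move=> n2 we; pose Z := [pred i | e i == 0].
have : (1 < #|Z|)%N.
  have := cardC Z; rewrite card_ord.
  have -> : #|[predC Z]| = wH e by apply: eq_card => i; rewrite !inE.
  by move: #|Z| (wH e) we => z w; lia.
by move=> /card_gt1P [a [a' [/eqP ea /eqP ea' aa']]]; exists a, a'.
Qed.

Lemma wH_le_subn2_zero_neq (e : zvec n) k :
  (2 <= n)%N -> (wH e <= n - 2)%N -> exists2 i, i != k & e i = 0.
Proof.
move=> n2 /(wH_le_subn2_zeros n2) [a [a' [aa' ea ea']]].
by case: (eqVneq a k) => [ak | ak]; [exists a'; rewrite // -ak eq_sym | exists a].
Qed.

Lemma exists_two_avoiding (p q : 'I_n) :
  (4 <= n)%N -> exists a a', [/\ a != a', [&& a != p & a != q] & [&& a' != p & a' != q]].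
Proof.
move=> n4; pose A := [pred i | (i != p) && (i != q)].
have : (1 < #|A|)%N.
  have := cardC A; rewrite card_ord.
  have : (#|[predC A]| <= 2)%N.
    apply: leq_trans (_ : #|[set p; q]| <= 2)%N; last by rewrite cards2; case: (p != q).
    by apply/subset_leq_card/subsetP => i; rewrite !inE negb_and !negbK.
  by move: #|A| #|[predC A]| => x y; lia.
by move=> /card_gt1P [a [a' [ha ha' aa']]]; exists a, a'.
Qed.

End Weight.

Definition pos_part n (e : zvec n) : zvec n := fun i => Num.max (e i) 0.
Definition neg_part n (e : zvec n) : zvec n := fun i => Num.max (- e i) 0.

Lemma packing_lattice_eq0 n t l (b : 'I_n -> zvec n) (D : zvec n) :
  packing t l b -> in_lattice b D -> (forall i, - (l%:Z) <= D i <= l%:Z) ->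
  (wH (pos_part D) <= t)%N -> (wH (neg_part D) <= t)%N -> forall i, D i = 0.
Proof.
move=> hp hD Dl wpos wneg.
apply: (hp D (fun _ => 0) (neg_part D) (pos_part D) hD (in_lattice0 b)).
- by split=> // i; have := Dl i; rewrite /neg_part; lia.
- by split=> // i; have := Dl i; rewrite /pos_part; lia.
- by move=> i; rewrite /neg_part /pos_part; lia.
Qed.

Section PerfectCode.

Variables (n l : nat) (b : 'I_n -> zvec n).
Hypotheses (n4 : (4 <= n)%N) (l1 : (1 <= l)%N) (hp : packing (n - 2) l b) (hc : covering (n - 2) l b).

Let n2 : (2 <= n)%N := ltnW (ltnW n4).

Lemma lattice_eq0_of_signs (D : zvec n) a a' c c' :
  in_lattice b D -> (forall i, - (l%:Z) <= D i <= l%:Z) ->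
  a != a' -> D a <= 0 -> D a' <= 0 -> c != c' -> 0 <= D c -> 0 <= D c' ->
  forall i, D i = 0.
Proof.
move=> hD Dl aa' Da Da' cc' Dc Dc'; apply: packing_lattice_eq0 hp hD Dl _ _.
- by apply: (wH_le_subn2 aa'); rewrite /pos_part; lia.
- by apply: (wH_le_subn2 cc'); rewrite /neg_part; lia.
Qed.

Definition ones_except (m : 'I_n) (x : int) : zvec n :=
  fun i => if i == m then x else 1.

Lemma lattice_ones_except m :
  exists x, - (l%:Z) <= x <= 0 /\ in_lattice b (ones_except m x).
Proof.
have [X [t [hX [[t0l wt] eZ]]]] := hc (ones_except m 0).
have {}eZ i : X i = ones_except m 0 i - t i by rewrite eZ addrK.
have Xl i : - (l%:Z) <= X i <= l%:Z.
  by have := t0l i; rewrite eZ /ones_except; case: (i == m) => /=; lia.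
have t0 i : i != m -> t i = 0.
  move=> im; apply/eqP; apply: contraT => ti.
  have [a am ta] := wH_le_subn2_zero_neq m n2 wt.
  have [c [c' [cc' tc tc']]] := wH_le_subn2_zeros n2 wt.
  have Xsign j : t j = 0 -> 0 <= X j by rewrite eZ /ones_except => ->; case: (j == m).
  have := lattice_eq0_of_signs hX Xl im _ _ cc' (Xsign c tc) (Xsign c' tc') a.
  rewrite !eZ /ones_except !eqxx (negbTE im) (negbTE am) ta.
  by have := t0l i; have := t0l m; move: ti; lia.
exists (- t m); split; first by have := t0l m; lia.
apply: in_lattice_ext hX _ => i; rewrite eZ /ones_except.
by case: ifP => [/eqP -> | /negbT im]; rewrite ?sub0r // t0 // subr0.
Qed.

Lemma lattice_ones_except_short_uniq a a' x x' :
  a != a' -> - (l%:Z) < x <= 0 -> - (l%:Z) < x' <= 0 ->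
  in_lattice b (ones_except a x) -> in_lattice b (ones_except a' x') -> False.
Proof.
move=> aa' hx hx' ha ha'.
have [c [c' [cc' /andP [ca ca'] /andP [c'a c'a']]]] := exists_two_avoiding a a' n4.
have hD := in_latticeB ha ha'.
have Dl i : - (l%:Z) <= ones_except a x i - ones_except a' x' i <= l%:Z.
  by rewrite /ones_except; case: (i == a); case: (i == a') => /=; lia.
have := lattice_eq0_of_signs hD Dl cc' _ _ cc' _ _ a.
rewrite /ones_except !eqxx (negbTE aa') (negbTE ca) (negbTE ca') (negbTE c'a) (negbTE c'a').
by rewrite subrr; move/(_ (lexx 0) (lexx 0) (lexx 0) (lexx 0)); lia.
Qed.

Lemma lattice_ones_except_long :
  exists k, forall j, j != k -> in_lattice b (ones_except j (- (l%:Z))).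
Proof.
have long_or_short j : in_lattice b (ones_except j (- (l%:Z))) \/
    exists2 x, - (l%:Z) < x <= 0 & in_lattice b (ones_except j x).
  have [x [hx hj]] := lattice_ones_except j.
  have [long | short] : x = - (l%:Z) \/ - (l%:Z) < x <= 0 by lia.
  - by left; rewrite -long.
  - by right; exists x.
have [[k [x hx hk]] | no_short] :=
  classic (exists k, exists2 x, - (l%:Z) < x <= 0 & in_lattice b (ones_except k x)).
- exists k => j jk; case: (long_or_short j) => // [[x' hx' hj]].
  by case: (lattice_ones_except_short_uniq jk hx' hx hj hk).
- have i0 : 'I_n by exists 0%N; lia.
  exists i0 => j _; case: (long_or_short j) => // short.
  by case: no_short; exists j.
Qed.

Lemma lattice_ones_except_long_pair a a' :
  (2 <= l)%N -> a != a' ->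
  in_lattice b (ones_except a (- (l%:Z))) -> in_lattice b (ones_except a' (- (l%:Z))) ->
  False.
Proof.
move=> l2 aa' ha ha'.
have [c [c' [cc' /andP [ca ca'] /andP [c'a c'a']]]] := exists_two_avoiding a a' n4.
have hD := in_latticeD ha ha'.
have Dl i : - (l%:Z) <= ones_except a (- (l%:Z)) i + ones_except a' (- (l%:Z)) i <= l%:Z.
  rewrite /ones_except; case: (eqVneq i a) => [-> | _]; rewrite ?(negbTE aa');
  by case: (i == a') => /=; lia.
have := lattice_eq0_of_signs hD Dl aa' _ _ cc' _ _ c.
rewrite /ones_except !eqxx (negbTE aa') (eq_sym a') (negbTE aa').
rewrite (negbTE ca) (negbTE ca') (negbTE c'a) (negbTE c'a').
by lia.
Qed.

Lemma lattice_ones_except_long_covering k :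
  l = 1%N -> (forall j, j != k -> in_lattice b (ones_except j (- (l%:Z)))) -> False.
Proof.
move=> l_eq1 long.
have [X [s [hX [[s01 ws] eZ]]]] := hc (fun i => if i == k then -1 else 0).
have {}eZ i : X i = (if i == k then -1 else 0) - s i by rewrite eZ addrK.
have [j jk sj] := wH_le_subn2_zero_neq k n2 ws.
have [c [c' [cc' /andP [cj ck] /andP [c'j c'k]]]] := exists_two_avoiding j k n4.
have hD := in_latticeB (in_latticeN hX) (long j jk).
have Dl i : - (l%:Z) <= - X i - ones_except j (- (l%:Z)) i <= l%:Z.
  have := s01 i; rewrite eZ /ones_except.
  case: (eqVneq i j) => [-> | _]; first by rewrite (negbTE jk) sj; lia.
  by case: (i == k) => /=; lia.
have := lattice_eq0_of_signs hD Dl cc' _ _ jk _ _ j.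
rewrite !eZ /ones_except !eqxx (negbTE cj) (negbTE ck) (negbTE c'j) (negbTE c'k).
by rewrite sj (eq_sym k) (negbTE jk); have := s01 c; have := s01 c'; have := s01 k; lia.
Qed.

End PerfectCode.

Theorem mainTheorem5 (n l : nat) :
  (4 <= n)%N -> (1 <= l)%N ->
  ~ exists b : 'I_n -> zvec n, perfect_code (n - 2) l b.
Proof.
move=> n4 l1 [b [_ [hp hc]]].
have [k long] := lattice_ones_except_long n4 l1 hp hc.
have [l_eq1 | l2] : l = 1%N \/ (2 <= l)%N by lia.
- exact: (lattice_ones_except_long_covering n4 l1 hp hc l_eq1 long).
- have [a [a' [aa' /andP [ak _] /andP [a'k _]]]] := exists_two_avoiding k k n4.
  exact: (lattice_ones_except_long_pair n4 l1 hp l2 aa' (long a ak) (long a' a'k)).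
Qed.
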